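(* Let $a$ and $b$ be coprime odd integers and let $\gamma$ be a positive integer such that $2^\gamma\,\|\,(a+b)$. Then: 1) For $\gamma\geq 2$, $OG_{(a,b)}(1)=\bigcup_{i=0}^{\gamma-1}\{d2^i : d\in OG_{(a,b)}(\gamma)\}$, where $OG_{(a,b)}(\gamma)=\{d\in\mathbb{N} : d=1 \text{ or } d \text{ is odd and } 2\,\|\,\operatorname{ord}_p(\tfrac ab) \text{ for every prime } p \text{ dividing } d\}$. 2) $EG_{(a,b)}(1)=\{d\in\mathbb{N} : d=1 \text{ or } d \text{ is odd and there exists } s\geq 2 \text{ such that } 2^s\,\|\,\operatorname{ord}_p(\tfrac ab) \text{ for every prime } p \text{ dividing } d\}$. 3) $OG_{(a,b)}(0)=OG_{(a,b)}(1)\cup\{2d : d\in OG_{(a,b)}(1)\}$. 4) $EG_{(a,b)}(0)=EG_{(a,b)}(1)\cup\{2d : d\in EG_{(a,b)}(1)\}$.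
   Context: For coprime nonzero integers $a,b$ and an integer $\beta\geq0$, $OG_{(a,b)}(\beta)$ (resp. $EG_{(a,b)}(\beta)$) is the set of positive integers $d$ such that $2^\beta d\mid(a^k+b^k)$ for some odd integer $k\geq1$ (resp. some even integer $k\geq 2$). For $n$ coprime to $ab$, $\operatorname{ord}_n(\frac ab)$ is the multiplicative order of $ab^{-1}$ modulo $n$ (conditions on it presuppose it is defined). $2^s\,\|\,m$ means $2^s\mid m$ and $2^{s+1}\nmid m$. *)

From mathcomp Require Import all_boot all_order all_algebra.
Set Implicit Arguments. Unset Strict Implicit. Unset Printing Implicit Defensive.
Import Order.TTheory GRing.Theory Num.Theory.
Local Open Scope ring_scope.

Definition OG (a b : int) (beta : nat) (d : nat) : Prop :=
  (0 < d)%N /\ exists k : nat, odd k /\ ((2 ^ beta * d)%N%:Z %| a ^+ k + b ^+ k)%Z.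

Definition EG (a b : int) (beta : nat) (d : nat) : Prop :=
  (0 < d)%N /\ exists k : nat, ~~ odd k /\ (2 <= k)%N /\
    ((2 ^ beta * d)%N%:Z %| a ^+ k + b ^+ k)%Z.

(* ord_is a b n k : n is coprime to ab (so ord_n(a/b) is defined) and k is the
   multiplicative order of a b^{-1} modulo n, i.e. the least k >= 1 with
   (a b^{-1})^k = 1 mod n, equivalently n | a^k - b^k. *)
Definition ord_is (a b : int) (n k : nat) : Prop :=
  coprimez n%:Z (a * b) /\ (0 < k)%N /\ (n%:Z %| a ^+ k - b ^+ k)%Z /\
  forall j : nat, (0 < j)%N -> (j < k)%N -> ~ (n%:Z %| a ^+ j - b ^+ j)%Z.

Definition exact2 (s m : nat) : Prop := (2 ^ s %| m)%N /\ ~ (2 ^ s.+1 %| m)%N.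

Definition ord_exact2 (a b : int) (n s : nat) : Prop :=
  exists k : nat, ord_is a b n k /\ exact2 s k.

(* For odd k, a^k + b^k = (a + b) S with S = k a^(k-1) modulo a + b, so S is
   odd and the 2-adic valuation of a^k + b^k is that of a + b; for even k,
   a^k + b^k = 2 (mod 4).  This determines the 2-parts of all four sets.
   An odd prime p divides a^k + b^k exactly when ord_p(a/b) divides 2k but not
   k, which pins the 2-adic valuation of the order to v_2(k) + 1.  Conversely,
   if every prime divisor of an odd d has an order of 2-adic valuation s, each
   divides a^(2^(s-1) m) + b^(2^(s-1) m) for some odd m; multiplying these odd
   exponents together and climbing prime powers with p (x + y) | x^p + y^p
   gives a single odd m that works for all of d. *)

From mathcomp Require Import all_boot all_order all_algebra.
From mathcomp Require Import zify ring.

Set Implicit Arguments.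
Unset Strict Implicit.
Unset Printing Implicit Defensive.

Import Order.TTheory GRing.Theory Num.Theory.
Local Open Scope ring_scope.

Lemma subrX_cofactor (x y : int) n :
  exists2 S, x ^+ n - y ^+ n = (x - y) * S & (x - y %| S - n%:Z * x ^+ n.-1)%Z.
Proof.
exists (\sum_(i < n) x ^+ (n.-1 - i) * y ^+ i); first exact: subrXX.
have -> : n%:Z * x ^+ n.-1 = \sum_(i < n) x ^+ (n.-1 - i) * x ^+ i.
  rewrite (eq_bigr (fun=> x ^+ n.-1)) => [|i _]; last first.
    by rewrite -exprD subnK // -ltnS prednK // (leq_trans _ (ltn_ord i)).
  by rewrite sumr_const card_ord -natz mulr_natl.
rewrite -sumrB; apply: rpred_sum => i _.
by rewrite -mulrBr dvdz_mull // -opprB rpredN subrXX dvdz_mulr.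
Qed.

Lemma addrX_oddE (x y : int) n : odd n -> x ^+ n + y ^+ n = x ^+ n - (- y) ^+ n.
Proof. by move=> n_odd; rewrite exprNn -signr_odd n_odd expr1 mulN1r opprK. Qed.

Lemma dvdz_addrX_odd (x y : int) n : odd n -> (x + y %| x ^+ n + y ^+ n)%Z.
Proof.
move=> n_odd; have [S E _] := subrX_cofactor x (- y) n.
by rewrite addrX_oddE // E opprK dvdz_mulr.
Qed.

Lemma dvdz_mul_addrX_odd (x y : int) n : odd n -> (n%:Z %| x + y)%Z ->
  (n%:Z * (x + y) %| x ^+ n + y ^+ n)%Z.
Proof.
move=> n_odd n_dvd; have [S E S_mod] := subrX_cofactor x (- y) n.
rewrite opprK in S_mod; rewrite addrX_oddE // E opprK mulrC dvdz_mul //.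
rewrite -(subrK (n%:Z * x ^+ n.-1) S) rpredD ?dvdz_mulr //.
exact: dvdz_trans n_dvd S_mod.
Qed.

Lemma dvdz_subrX_dvdn (x y d : int) t j : (t %| j)%N ->
  (d %| x ^+ t - y ^+ t)%Z -> (d %| x ^+ j - y ^+ j)%Z.
Proof. by move=> /dvdnP[c ->] d_dvd; rewrite mulnC !exprM subrXX dvdz_mulr. Qed.

Lemma prime_dvdzM (p : nat) (x y : int) : prime p ->
  (p%:Z %| x * y)%Z = (p%:Z %| x)%Z || (p%:Z %| y)%Z.
Proof. by move=> p_pr; rewrite !dvdzE abszM Euclid_dvdM. Qed.

Lemma prime_dvdzX (p : nat) (x : int) n : prime p -> (0 < n)%N ->
  (p%:Z %| x ^+ n)%Z = (p%:Z %| x)%Z.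
Proof. by move=> p_pr n_gt0; rewrite !dvdzE abszX Euclid_dvdX // n_gt0 andbT. Qed.

Lemma prime_coprimez (p : nat) (x : int) : prime p ->
  coprimez p%:Z x = ~~ (p%:Z %| x)%Z.
Proof. by move=> p_pr; rewrite coprimezE prime_coprime. Qed.

Lemma dvdz_addrX_odd_exponent (x y : int) (d : nat) : odd d ->
  (forall p, prime p -> (p %| d)%N -> exists2 m, odd m & (p%:Z %| x ^+ m + y ^+ m)%Z) ->
  exists2 k, odd k & (d%:Z %| x ^+ k + y ^+ k)%Z.
Proof.
elim/ltn_ind: d => d IH d_odd d_primes.
have [d_gt1|d_le1] := ltnP 1 d; last first.
  have -> : d = 1%N by case: d d_le1 d_odd {IH d_primes} => [|[]].
  by exists 1%N; rewrite ?dvd1z.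
have [p p_pr p_dvd] := pdivP d_gt1; have [c Ed] := dvdnP p_dvd.
have p_odd : odd p by apply: dvdn_odd p_dvd d_odd.
have c_dvd : (c %| d)%N by rewrite Ed dvdn_mulr.
have c_gt0 : (0 < c)%N by move: d_gt1; rewrite Ed lt0n; apply: contraTneq => ->.
have [kc kc_odd c_dvd_sum] : exists2 k, odd k & (c%:Z %| x ^+ k + y ^+ k)%Z.
  apply: IH; first by rewrite Ed ltn_Pmulr ?prime_gt1.
    exact: dvdn_odd c_dvd d_odd.
  by move=> q q_pr q_dvd; apply: d_primes q_pr (dvdn_trans q_dvd c_dvd).
have [kp kp_odd p_dvd_sum] := d_primes p p_pr p_dvd.
set X := x ^+ (kc * kp); set Y := y ^+ (kc * kp).
have c_dvdXY : (c%:Z %| X + Y)%Z.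
  by rewrite /X /Y !exprM (dvdz_trans c_dvd_sum) ?dvdz_addrX_odd.
have p_dvdXY : (p%:Z %| X + Y)%Z.
  by rewrite /X /Y mulnC !exprM (dvdz_trans p_dvd_sum) ?dvdz_addrX_odd.
exists (kc * kp * p)%N; first by rewrite !oddM kc_odd kp_odd p_odd.
rewrite Ed PoszM mulrC !(exprM _ (kc * kp)) -/X -/Y.
exact: dvdz_trans (dvdz_mul (dvdzz _) c_dvdXY) (dvdz_mul_addrX_odd p_odd p_dvdXY).
Qed.

Lemma exact2_pow2_dvdn s m j : exact2 s m -> (2 ^ j %| m)%N = (j <= s)%N.
Proof.
move=> [s_dvd s1_ndvd]; case: leqP => [j_le|s_lt].
  exact: dvdn_trans (dvdn_exp2l 2 j_le) s_dvd.
by apply/negbTE/negP => j_dvd; apply/s1_ndvd/(dvdn_trans _ j_dvd); rewrite dvdn_exp2l.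
Qed.

Lemma exact2_mulr_odd s m n : odd n -> exact2 s m -> exact2 s (m * n).
Proof.
move=> n_odd [s_dvd s1_ndvd]; split; first exact: dvdn_mulr.
by rewrite Gauss_dvdl // coprimeXl // coprime2n.
Qed.

Lemma exact2_dvdn_odd s m d : exact2 s m -> (2 ^ s * d %| m)%N -> odd d.
Proof.
move=> m_exact d_dvd; apply: contraFT (ltnn s) => d_even.
rewrite -(exact2_pow2_dvdn s.+1 m_exact); apply: dvdn_trans d_dvd.
by rewrite expnSr dvdn_pmul2l ?expn_gt0 // dvdn2.
Qed.

Lemma dvdn_pow2_mul_odd s m d : odd d -> (2 ^ s %| m)%N ->
  (2 ^ s * d %| m)%N = (d %| m)%N.
Proof. by move=> d_odd s_dvd; rewrite Gauss_dvd ?s_dvd // coprimeXl // coprime2n. Qed.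

Lemma exact2_oddP s t : exact2 s t -> exists2 m, odd m & t = (2 ^ s * m)%N.
Proof.
move=> [s_dvd s1_ndvd]; exists (t %/ 2 ^ s)%N; last by rewrite mulnC divnK.
apply/negPn/negP; rewrite -dvdn2 => two_dvd; apply: s1_ndvd.
by rewrite -(divnK s_dvd) expnSr mulnC dvdn_mul.
Qed.

Lemma exact2_dvdn_double t k : (0 < k)%N -> (t %| k * 2)%N -> ~~ (t %| k)%N ->
  exact2 (logn 2 k).+1 t.
Proof.
move=> k_gt0 t_dvd t_ndvd.
have t_gt0 : (0 < t)%N by apply: dvdn_gt0 t_dvd; rewrite muln_gt0 k_gt0.
have [k' k'_odd Ek] := pfactor_coprime (isT : prime 2) k_gt0.
have [t' t'_odd Et] := pfactor_coprime (isT : prime 2) t_gt0.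
set u := logn 2 k in Ek *; set v := logn 2 t in Et.
have {}t_dvd : (t %| k' * 2 ^ u.+1)%N by rewrite expnSr mulnA -Ek.
split.
  rewrite Et Gauss_dvdr ?coprimeXl // dvdn_Pexp2l //.
  apply: contraNT t_ndvd; rewrite -leqNgt Et Ek => v_le; rewrite dvdn_mul ?dvdn_exp2l //.
  rewrite -(@Gauss_dvdl _ _ (2 ^ u.+1)) ?coprimeXr 1?coprime_sym //.
  by apply: dvdn_trans t_dvd; rewrite Et dvdn_mulr.
move=> /dvdn_trans/(_ t_dvd); rewrite Gauss_dvdr ?coprimeXl //.
by rewrite dvdn_Pexp2l // ltnn.
Qed.

Lemma oddzP (x : int) : ~~ (2 %| x)%Z -> exists q, x = 2 * q + 1.
Proof.
move=> x_odd; exists (x %/ 2)%Z; rewrite [LHS](divz_eq x 2) mulrC; congr (_ + _).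
have : (x %% 2)%Z != 0 by apply: contra x_odd => /eqP/dvdz_mod0P.
have : 0 <= (x %% 2)%Z by rewrite modz_ge0.
have : (x %% 2)%Z < 2 by rewrite ltz_pmod.
lia.
Qed.

Lemma oddzX n (x : int) : ~~ (2 %| x)%Z -> ~~ (2 %| x ^+ n)%Z.
Proof. by rewrite !dvdzE abszX Euclid_dvdX // negb_and => ->. Qed.

Lemma dvdz2_addrX (x y : int) k : ~~ (2 %| x)%Z -> ~~ (2 %| y)%Z ->
  (2 %| x ^+ k + y ^+ k)%Z.
Proof.
move=> /(oddzX k)/oddzP[q ->] /(oddzX k)/oddzP[r ->].
by apply/dvdzP; exists (q + r + 1); ring.
Qed.

Lemma exact2_addrX_even (x y : int) j : ~~ (2 %| x)%Z -> ~~ (2 %| y)%Z ->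
  exact2 1 `|x ^+ (j * 2) + y ^+ (j * 2)|.
Proof.
move=> x_odd y_odd; split; first exact: dvdz2_addrX.
rewrite !exprM; move: x_odd y_odd => /(oddzX j)/oddzP[q ->] /(oddzX j)/oddzP[r ->].
by rewrite -[(2 ^ 2)%N]/(`|4%:Z|)%N -dvdzE => /dvdzP[w]; nia.
Qed.

Lemma exact2_addrX_odd (x y : int) g k : ~~ (2 %| x)%Z -> (0 < g)%N ->
  exact2 g `|x + y| -> odd k -> exact2 g `|x ^+ k + y ^+ k|.
Proof.
move=> x_odd g_gt0 xy_exact k_odd; have [S E S_mod] := subrX_cofactor x (- y) k.
rewrite opprK in S_mod; rewrite addrX_oddE // E opprK abszM.
have two_dvd : (2 %| x + y)%Z by rewrite dvdzE (exact2_pow2_dvdn 1 xy_exact).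
apply: exact2_mulr_odd xy_exact; rewrite -[odd _]negbK -dvdn2.
(* S = k x^(k-1) modulo the even number x + y *)
have kx_odd : ~~ (2 %| k%:Z * x ^+ k.-1)%Z.
  by rewrite prime_dvdzM // negb_or oddzX // dvdzE dvdn2 negbK k_odd.
apply: contra kx_odd => S_even; rewrite -(subKr S (k%:Z * x ^+ k.-1)).
by rewrite rpredB // (dvdz_trans two_dvd).
Qed.

Section MultiplicativeOrder.
Variables a b : int.

Lemma ord_is_exists (n j : nat) : coprimez n%:Z (a * b) -> (0 < j)%N ->
  (n%:Z %| a ^+ j - b ^+ j)%Z -> exists t, ord_is a b n t.
Proof.
move=> n_coprime j_gt0 n_dvd.
have exP : exists j, (0 < j)%N && (n%:Z %| a ^+ j - b ^+ j)%Z by exists j; rewrite j_gt0.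
case: (ex_minnP exP) => t /andP[t_gt0 n_dvd_t] t_min.
exists t; do 3!split=> //; move=> i i_gt0 i_lt.
by move/(conj i_gt0)/andP/t_min; rewrite leqNgt i_lt.
Qed.

Lemma ord_is_dvdn (n t j : nat) : ord_is a b n t ->
  (n%:Z %| a ^+ j - b ^+ j)%Z <-> (t %| j)%N.
Proof.
move=> [n_coprime [t_gt0 [n_dvd_t t_min]]]; split; last by move/dvdz_subrX_dvdn; apply.
move=> n_dvd_j; have [r0|r_gt0] := posnP (j %% t); first by rewrite /dvdn r0.
case: (t_min _ r_gt0 (ltn_pmod j t_gt0)); set r := (j %% t)%N.
set q := (j %/ t * t)%N.
have n_dvd_q : (n%:Z %| a ^+ q - b ^+ q)%Z.
  exact: dvdz_subrX_dvdn (dvdn_mull _ (dvdnn t)) n_dvd_t.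
have Ej : a ^+ j - b ^+ j = a ^+ r * (a ^+ q - b ^+ q) + b ^+ q * (a ^+ r - b ^+ r).
  by rewrite {1 2}(divn_eq j t) !exprD; ring.
have n_coprime_bq : coprimez n%:Z (b ^+ q).
  by apply: coprimezXr; move: n_coprime; rewrite coprimezMr => /andP[].
by rewrite -(Gauss_dvdzr _ n_coprime_bq) -(rpredDl _ (dvdz_mull (a ^+ r) n_dvd_q)) -Ej.
Qed.

Lemma coprimez_prime_addrX (p k : nat) : prime p -> coprimez a b -> (0 < k)%N ->
  (p%:Z %| a ^+ k + b ^+ k)%Z -> coprimez p%:Z (a * b).
Proof.
move=> p_pr ab_coprime k_gt0 p_dvd.
have coprime_l (x y : int) : coprimez x y -> (p%:Z %| x ^+ k + y ^+ k)%Z ->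
    coprimez p%:Z x.
  move=> xy_coprime xy_dvd; rewrite prime_coprimez //; apply/negP => p_dvd_x.
  have : (p%:Z %| gcdz x y)%Z.
    rewrite dvdz_gcd p_dvd_x -(prime_dvdzX y p_pr k_gt0).
    by rewrite -(rpredDl _ (dvdz_exp k_gt0 p_dvd_x)).
  by rewrite (eqP xy_coprime) dvdz1 => /eqP p1; rewrite [p]p1 in p_pr.
by rewrite coprimezMr (coprime_l a b) // (coprime_l b a) 1?coprimez_sym // addrC.
Qed.

Lemma ord_exact2_addrX (p k : nat) : prime p -> odd p -> coprimez a b -> (0 < k)%N ->
  (p%:Z %| a ^+ k + b ^+ k)%Z -> ord_exact2 a b p (logn 2 k).+1.
Proof.
move=> p_pr p_odd ab_coprime k_gt0 p_dvd.
have p_coprime := coprimez_prime_addrX p_pr ab_coprime k_gt0 p_dvd.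
have p_dvd2 : (p%:Z %| a ^+ (k * 2) - b ^+ (k * 2))%Z.
  by rewrite !exprM subr_sqr dvdz_mull.
have [|t t_ord] := ord_is_exists p_coprime _ p_dvd2; first by rewrite muln_gt0 k_gt0.
exists t; split => //; apply: exact2_dvdn_double k_gt0 _ _.
  by apply/(ord_is_dvdn _ t_ord).
apply/negP => /(ord_is_dvdn k t_ord) p_dvd_sub.
have : (p%:Z %| 2 * a ^+ k)%Z.
  have -> : 2 * a ^+ k = (a ^+ k + b ^+ k) + (a ^+ k - b ^+ k) by ring.
  exact: rpredD.
have p_ndvd_2 : ~~ (p%:Z %| 2)%Z.
  by rewrite dvdzE /= dvdn_prime2 //; apply: contraTneq p_odd => ->.
rewrite prime_dvdzM // (negPf p_ndvd_2); apply/negP.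
rewrite -prime_coprimez // coprimezXr //.
by move: p_coprime; rewrite coprimezMr => /andP[].
Qed.

Lemma ord_is_double_dvdz (p h : nat) : prime p -> ord_is a b p (h * 2) ->
  (p%:Z %| a ^+ h + b ^+ h)%Z.
Proof.
move=> p_pr [_ [h2_gt0 [p_dvd h_min]]].
have h_gt0 : (0 < h)%N by move: h2_gt0; rewrite muln_gt0 => /andP[].
move: p_dvd; rewrite !exprM subr_sqr prime_dvdzM // => /orP[p_dvd_sub|//].
by case: (h_min h h_gt0 (ltn_Pmulr (isT : 1 < 2)%N h_gt0)).
Qed.

Lemma dvdz_addrX_ord_exact2 (d s : nat) : (0 < s)%N -> odd d ->
  (forall p, prime p -> (p %| d)%N -> ord_exact2 a b p s) ->
  exists2 m, odd m & (d%:Z %| a ^+ (2 ^ s.-1 * m) + b ^+ (2 ^ s.-1 * m))%Z.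
Proof.
move=> s_gt0 d_odd d_primes.
have [|m m_odd] := @dvdz_addrX_odd_exponent (a ^+ (2 ^ s.-1)) (b ^+ (2 ^ s.-1)) d d_odd.
  move=> p p_pr p_dvd; have [t [t_ord t_exact]] := d_primes p p_pr p_dvd.
  have [m m_odd Et] := exact2_oddP t_exact; exists m => //.
  rewrite -!exprM; apply: ord_is_double_dvdz p_pr _.
  by rewrite mulnAC -expnSr prednK // -Et.
by rewrite -!exprM; exists m.
Qed.

End MultiplicativeOrder.

(* [OG a b beta] is convertible to [powsum_divisor a b odd beta]. *)
Definition powsum_divisor (a b : int) (K : pred nat) (beta d : nat) : Prop :=
  (0 < d)%N /\ exists k : nat, K k /\ ((2 ^ beta * d)%N%:Z %| a ^+ k + b ^+ k)%Z.

Lemma EG_powsum (a b : int) beta d :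
  EG a b beta d <-> powsum_divisor a b [pred k | ~~ odd k & (1 < k)%N] beta d.
Proof.
split=> -[d_gt0 [k k_dvd]]; split=> //; exists k; move: k_dvd => /=.
  by case=> k_even [k_ge2 dvd]; rewrite k_even k_ge2.
by case=> /andP[k_even k_ge2 dvd].
Qed.

Section PowsumDivisor.
Variables (a b : int) (K : pred nat).

Lemma powsum_divisor0 d : (forall k, K k -> (2 %| a ^+ k + b ^+ k)%Z) ->
  powsum_divisor a b K 0 d <->
  powsum_divisor a b K 1 d \/ exists2 d', powsum_divisor a b K 1 d' & d = (2 * d')%N.
Proof.
move=> K_even; split=> [[d_gt0 [k [Kk d_dvd]]]|].
  rewrite expn0 mul1n in d_dvd; have [d_odd|d_even] := boolP (odd d).
    have two_dvd : (2 ^ 1 %| `|(a ^+ k + b ^+ k)%R|)%N by apply: K_even.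
    by left; split=> //; exists k; rewrite dvdzE /= dvdn_pow2_mul_odd.
  have Ed : d = (2 * d./2)%N by rewrite mul2n -[LHS]odd_double_half (negPf d_even).
  right; exists d./2 => //; split; first by move: d_gt0; rewrite {1}Ed muln_gt0.
  by exists k; rewrite expn1 -Ed.
case=> [[d_gt0 [k [Kk d_dvd]]]|[d' [d'_gt0 [k [Kk d'_dvd]]] ->]].
  split=> //; exists k; split=> //; apply: dvdz_trans d_dvd.
  by rewrite dvdzE /= expn0 mul1n dvdn_mull.
by split; [rewrite muln_gt0 | exists k; rewrite expn0 mul1n -(expn1 2)].
Qed.

Lemma powsum_divisor1 g d : (forall k, K k -> exact2 g `|a ^+ k + b ^+ k|) ->
  powsum_divisor a b K 1 d <->
  exists2 i, (i < g)%N & exists2 d', powsum_divisor a b K g d' & d = (d' * 2 ^ i)%N.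
Proof.
move=> K_exact; split=> [[d_gt0 [k [Kk d_dvd]]]|].
  have [d' d'_coprime Ed] := pfactor_coprime (isT : prime 2) d_gt0.
  have d'_odd : odd d' by rewrite -coprime2n.
  have m_exact := K_exact k Kk; set i := logn 2 d in Ed.
  move: d_dvd; rewrite dvdzE /= Ed expn1 mulnCA -expnS mulnC Gauss_dvd ?coprimeXl //.
  rewrite (exact2_pow2_dvdn _ m_exact) => /andP[i_lt d'_dvd].
  exists i => //; exists d' => //; split; first exact: odd_gt0.
  by exists k; rewrite dvdzE /= dvdn_pow2_mul_odd // (exact2_pow2_dvdn _ m_exact).
case=> i i_lt [d' [d'_gt0 [k [Kk d'_dvd]]] ->].
split; first by rewrite muln_gt0 d'_gt0 expn_gt0.
exists k; split=> //; apply: dvdz_trans d'_dvd.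
by rewrite dvdzE /= expn1 mulnCA -expnS mulnC dvdn_mul // dvdn_exp2l.
Qed.

Lemma powsum_divisor_odd s d : (forall k, K k -> exact2 s `|a ^+ k + b ^+ k|) ->
  powsum_divisor a b K s d -> odd d.
Proof.
by move=> K_exact [_ [k [Kk d_dvd]]]; apply: exact2_dvdn_odd (K_exact k Kk) d_dvd.
Qed.

End PowsumDivisor.

Lemma EG_0 (a b : int) d : ~~ (2 %| a)%Z -> ~~ (2 %| b)%Z ->
  EG a b 0 d <-> EG a b 1 d \/ exists2 d', EG a b 1 d' & d = (2 * d')%N.
Proof.
move=> a_odd b_odd; have K_even k : (~~ odd k && (1 < k))%N -> (2 %| a ^+ k + b ^+ k)%Z.
  by move=> _; apply: dvdz2_addrX.
split=> [/EG_powsum/(powsum_divisor0 _ K_even)[/EG_powsum|[d' /EG_powsum]]|EG_d].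
- by left.
- by right; exists d'.
apply/EG_powsum/(powsum_divisor0 _ K_even).
by case: EG_d => [/EG_powsum|[d' /EG_powsum]]; [left | right; exists d'].
Qed.

Section OddCoprime.
Variables (a b : int) (g : nat).
Hypotheses (a_odd : ~~ (2 %| a)%Z) (b_odd : ~~ (2 %| b)%Z) (ab_coprime : coprimez a b).
Hypotheses (g_gt0 : (0 < g)%N) (ab_exact : exact2 g `|a + b|).

Lemma OG_primes d : OG a b g d <->
  d = 1%N \/ odd d /\ (forall p, prime p -> (p %| d)%N -> ord_exact2 a b p 1).
Proof.
have K_exact k : odd k -> exact2 g `|a ^+ k + b ^+ k|.
  exact: exact2_addrX_odd a_odd g_gt0 ab_exact.
split=> [OG_d|[->|[d_odd d_primes]]].
- have d_odd : odd d := powsum_divisor_odd K_exact OG_d.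
  have [->|_] := eqVneq d 1%N; [by left | right; split=> // p p_pr p_dvd].
  have [_ [k [k_odd d_dvd]]] := OG_d.
  have p_dvd_sum : (p%:Z %| a ^+ k + b ^+ k)%Z.
    by apply: dvdz_trans d_dvd; rewrite dvdzE dvdn_mull.
  have p_odd : odd p := dvdn_odd p_dvd d_odd.
  have := ord_exact2_addrX p_pr p_odd ab_coprime (odd_gt0 k_odd) p_dvd_sum.
  by rewrite logn_coprime ?coprime2n.
- by split=> //; exists 1%N; rewrite muln1 !expr1; case: ab_exact.
have [m m_odd d_dvd] := dvdz_addrX_ord_exact2 (isT : 0 < 1)%N d_odd d_primes.
split; first exact: odd_gt0.
rewrite expn0 mul1n in d_dvd; have [two_dvd _] := K_exact m m_odd.
by exists m; rewrite dvdzE /= dvdn_pow2_mul_odd.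
Qed.

Lemma EG_primes d : EG a b 1 d <->
  d = 1%N \/ odd d /\ exists2 s, (2 <= s)%N &
    forall p, prime p -> (p %| d)%N -> ord_exact2 a b p s.
Proof.
split=> [[d_gt0 [k [k_even [k_ge2 d_dvd]]]]|[->|[d_odd [s s_ge2 d_primes]]]].
- have k_gt0 : (0 < k)%N by apply: ltnW.
  have [j Ek] : exists j, k = (j * 2)%N.
    by exists k./2; rewrite muln2 -[LHS]odd_double_half (negPf k_even).
  have k_exact : exact2 1 `|a ^+ k + b ^+ k| by rewrite Ek; apply: exact2_addrX_even.
  have d_odd : odd d := exact2_dvdn_odd k_exact d_dvd.
  have [->|_] := eqVneq d 1%N; [by left | right; split=> //].
  exists (logn 2 k).+1.
    by rewrite ltnS -(pfactor_dvdn 1 (isT : prime 2) k_gt0) dvdn2.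
  move=> p p_pr p_dvd; have p_odd : odd p := dvdn_odd p_dvd d_odd.
  apply: ord_exact2_addrX p_pr p_odd ab_coprime k_gt0 _.
  by apply: dvdz_trans d_dvd; rewrite dvdzE dvdn_mull.
- by split=> //; exists 2%N; rewrite muln1 expn1 dvdz2_addrX.
have [m m_odd d_dvd] := dvdz_addrX_ord_exact2 (ltnW s_ge2) d_odd d_primes.
have s1_gt0 : (0 < s.-1)%N by rewrite -ltnS prednK // ltnW.
split; first exact: odd_gt0.
exists (2 ^ s.-1 * m)%N; split; first by rewrite oddM oddX eqn0Ngt s1_gt0.
split.
  by rewrite (leq_trans _ (leq_pmulr _ (odd_gt0 m_odd))) // -{1}(expn1 2) leq_pexp2l.
have two_dvd : (2 ^ 1 %| `|(a ^+ (2 ^ s.-1 * m) + b ^+ (2 ^ s.-1 * m))%R|)%N.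
  exact: dvdz2_addrX.
by rewrite dvdzE /= dvdn_pow2_mul_odd.
Qed.

End OddCoprime.

Theorem theorem2p21 (a b : int) (g : nat) :
  ~~ (2 %| a)%Z -> ~~ (2 %| b)%Z -> coprimez a b -> (0 < g)%N ->
  ((2 ^ g)%N%:Z %| a + b)%Z -> ~~ ((2 ^ g.+1)%N%:Z %| a + b)%Z ->
  [/\ (* 1) *)
      ((2 <= g)%N ->
        (forall d : nat, OG a b 1 d <->
           exists2 i : nat, (i < g)%N &
             exists2 d' : nat, OG a b g d' & d = (d' * 2 ^ i)%N) /\
        (forall d : nat, OG a b g d <->
           (d = 1%N \/ (odd d /\
              forall p : nat, prime p -> (p %| d)%N -> ord_exact2 a b p 1)))),
      (* 2) *)
      (forall d : nat, EG a b 1 d <->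
         (d = 1%N \/ (odd d /\ exists2 s : nat, (2 <= s)%N &
              forall p : nat, prime p -> (p %| d)%N -> ord_exact2 a b p s))),
      (* 3) *)
      (forall d : nat, OG a b 0 d <->
         (OG a b 1 d \/ exists2 d' : nat, OG a b 1 d' & d = (2 * d')%N))
    & (* 4) *)
      (forall d : nat, EG a b 0 d <->
         (EG a b 1 d \/ exists2 d' : nat, EG a b 1 d' & d = (2 * d')%N))].
Proof.
move=> a_odd b_odd ab_coprime g_gt0 g_dvd g1_ndvd.
have ab_exact : exact2 g `|a + b| by split=> //; apply/negP.
split=> [_|d|d|d].
- split=> d; last exact: OG_primes.
  by apply: powsum_divisor1 => k; apply: exact2_addrX_odd.
- exact: EG_primes.
- by apply: powsum_divisor0 => k _; apply: dvdz2_addrX.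
- exact: EG_0.
Qed.
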